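(* For any formula $A$, the sequent $\Box(\Box(A\to\Box A)\to A)\Rightarrow A$ is provable in $\mathsf{Grz}_\infty$.
   Context: Formulas are built from $\bot$ and atomic propositions using $\to$ and $\Box$. A sequent is $\Gamma\Rightarrow\Delta$ with $\Gamma,\Delta$ finite multisets of formulas; $\Box\Pi$ denotes the multiset $\{\Box B:B\in\Pi\}$. The calculus $\mathsf{Grz}_\infty$ has initial sequents $\Gamma,p\Rightarrow p,\Delta$ ($p$ atomic) and $\Gamma,\bot\Rightarrow\Delta$, and rules: $(\to_L)$ from $\Gamma,B\Rightarrow\Delta$ and $\Gamma\Rightarrow A,\Delta$ infer $\Gamma,A\to B\Rightarrow\Delta$; $(\to_R)$ from $\Gamma,A\Rightarrow B,\Delta$ infer $\Gamma\Rightarrow A\to B,\Delta$; $(\mathsf{refl})$ from $\Gamma,B,\Box B\Rightarrow\Delta$ infer $\Gamma,\Box B\Rightarrow\Delta$; $(\Box)$ from left premise $\Gamma,\Box\Pi\Rightarrow A,\Delta$ and right premise $\Box\Pi\Rightarrow A$ infer $\Gamma,\Box\Pi\Rightarrow\Box A,\Delta$. An $\infty$-proof is a possibly infinite tree of sequents built by these rules, with leaves labelled by initial sequents, in which every infinite branch passes through a right premise of $(\Box)$ infinitely often; a sequent is provable if it labels the root of an $\infty$-proof. *)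

From Stdlib Require Import List Permutation Arith.
Import ListNotations.

Inductive form : Type :=
| Bot : form
| Var : nat -> form
| Imp : form -> form -> form
| Box : form -> form.

(** A sequent Gamma => Delta; the lists are read as multisets
    (rule applications are matched up to permutation). *)
Definition sequent : Type := (list form * list form)%type.

Definition seq_equiv (s s' : sequent) : Prop :=
  Permutation (fst s) (fst s') /\ Permutation (snd s) (snd s').

Inductive rule : Type :=
| RInitAt
| RInitBot
| RImpL | RImpR | RRefl | RBox.

(** [step s r prems]: [s] is the conclusion of an instance of rule [r] whose
    premises (in order) are [prems]. For (Box), the premises are
    [left premise; right premise]. *)
Definition step (s : sequent) (r : rule) (prems : list sequent) : Prop :=
  match r with
  | RInitAt => prems = [] /\
      exists G D p, seq_equiv s (Var p :: G, Var p :: D)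
  | RInitBot => prems = [] /\
      exists G D, seq_equiv s (Bot :: G, D)
  | RImpL => exists G D A B, seq_equiv s (Imp A B :: G, D) /\
      prems = [(B :: G, D); (G, A :: D)]
  | RImpR => exists G D A B, seq_equiv s (G, Imp A B :: D) /\
      prems = [(A :: G, B :: D)]
  | RRefl => exists G D B, seq_equiv s (Box B :: G, D) /\
      prems = [(B :: Box B :: G, D)]
  | RBox => exists G D Pi A, seq_equiv s (G ++ map Box Pi, Box A :: D) /\
      prems = [(G ++ map Box Pi, A :: D); (map Box Pi, [A])]
  end.

CoInductive ptree : Type :=
| Node : sequent -> rule -> list ptree -> ptree.

Definition label (t : ptree) : sequent := match t with Node s _ _ => s end.

Definition node_ok (t : ptree) : Prop :=
  match t with Node s r ch => step s r (map label ch) end.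

(** Following a path [p] (p n = index of the child chosen at depth n). *)
Fixpoint walk (t : ptree) (p : nat -> nat) (n : nat) : option ptree :=
  match n with
  | 0 => Some t
  | S m => match walk t p m with
           | Some (Node _ _ ch) => nth_error ch (p m)
           | None => None
           end
  end.

Definition box_right_step (t : ptree) (p : nat -> nat) (n : nat) : Prop :=
  (exists s ch, walk t p n = Some (Node s RBox ch)) /\ p n = 1.

(** An infinite-proof: every node is a correct rule instance (leaves are
    thus initial sequents), and every infinite branch passes through a
    right premise of (Box) infinitely often. *)
Definition inf_proof (t : ptree) : Prop :=
  (forall p n t', walk t p n = Some t' -> node_ok t') /\
  (forall p, (forall n, walk t p n <> None) ->
     forall N, exists n, N <= n /\ box_right_step t p n).

Definition Grz_provable (s : sequent) : Prop :=
  exists t, inf_proof t /\ label t = s.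

(** The sequent has a cyclic derivation: unfolding the boxed premise by
    (refl) and (->L), the only open leaf after two (Box) inferences is the
    root sequent itself, reached as the right premise of a (Box) inference.
    Repeating this loop forever gives an infinite tree whose only infinite
    branch passes through right premises of (Box) infinitely often; every
    other branch closes with an identity sequent [B, G => B, D], which has a
    finite derivation by induction on [B]. *)
From Stdlib Require Import List Permutation Arith.
Import ListNotations.

Inductive fin_proof : ptree -> Prop :=
| fin_proof_node s r ch :
    step s r (map label ch) -> (forall c, In c ch -> fin_proof c) ->
    fin_proof (Node s r ch).

Definition fin_provable (s : sequent) : Prop :=
  exists t, fin_proof t /\ label t = s.

Lemma fin_provable_step s r ps :
  step s r ps -> Forall fin_provable ps -> fin_provable s.
Proof.
  intros Hstep Hps.
  assert (Hts : exists ts, map label ts = ps /\ Forall fin_proof ts).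
  { clear Hstep. induction Hps as [|p ps Hp _ IH].
    - exists []; auto.
    - destruct Hp as (t & Ht & <-). destruct IH as (ts & <- & Hts).
      exists (t :: ts); auto. }
  destruct Hts as (ts & <- & Hts).
  exists (Node s r ts); split; [|reflexivity].
  constructor; [exact Hstep|]. apply Forall_forall, Hts.
Qed.

Lemma perm_cons_of_in (B : form) (G : list form) :
  In B G -> exists G0, Permutation G (B :: G0).
Proof.
  intros (G1 & G2 & ->)%in_split.
  exists (G1 ++ G2). apply Permutation_sym, Permutation_middle.
Qed.

Lemma fin_provable_identity (B : form) :
  forall G D, In B G -> In B D -> fin_provable (G, D).
Proof.
  induction B as [|p|X IHX Y IHY|X IHX]; intros G D
    [G0 HG]%perm_cons_of_in [D0 HD]%perm_cons_of_in.
  - eapply (fin_provable_step _ RInitBot); [|constructor].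
    split; [reflexivity|]. exists G0, D. split; simpl; auto.
  - eapply (fin_provable_step _ RInitAt); [|constructor].
    split; [reflexivity|]. exists G0, D0, p. split; simpl; auto.
  - eapply (fin_provable_step _ RImpR).
    { exists G, D0, X, Y. split; [split; simpl; auto|reflexivity]. }
    constructor; [|constructor].
    eapply (fin_provable_step _ RImpL).
    { exists (X :: G0), (Y :: D0), X, Y. split; [|reflexivity].
      split; simpl; [|reflexivity].
      transitivity (X :: Imp X Y :: G0); [apply perm_skip, HG|apply perm_swap]. }
    repeat constructor; [apply IHY | apply IHX]; simpl; auto.
  - eapply (fin_provable_step _ RBox).
    { exists G0, D0, [X], X. split; [|reflexivity].
      split; simpl; [|exact HD].
      transitivity (Box X :: G0); [exact HG|apply Permutation_cons_append]. }
    repeat constructor.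
    + eapply (fin_provable_step _ RRefl).
      { exists G0, (X :: D0), X. split; [|reflexivity].
        split; simpl; [apply Permutation_sym, Permutation_cons_append|reflexivity]. }
      repeat constructor. apply IHX; simpl; auto.
    + eapply (fin_provable_step _ RRefl).
      { exists [], [X], X. split; [split; reflexivity|reflexivity]. }
      repeat constructor. apply IHX; simpl; auto.
Qed.

Lemma walk_node_succ s r ch p n :
  walk (Node s r ch) p (S n) =
  match nth_error ch (p 0) with
  | Some c => walk c (fun k => p (S k)) n
  | None => None
  end.
Proof.
  induction n as [|n IH]; simpl in *.
  - destruct (nth_error ch (p 0)); reflexivity.
  - rewrite IH. destruct (nth_error ch (p 0)); reflexivity.
Qed.

Lemma walk_add t p N m :
  walk t p (N + m) =
  match walk t p N with
  | Some t' => walk t' (fun k => p (N + k)) m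
  | None => None
  end.
Proof.
  induction m as [|m IH].
  - rewrite Nat.add_0_r. destruct (walk t p N); reflexivity.
  - rewrite Nat.add_succ_r. simpl. rewrite IH.
    destruct (walk t p N); reflexivity.
Qed.

Lemma ptree_eta (t : ptree) : t = match t with Node s r ch => Node s r ch end.
Proof. destruct t; reflexivity. Qed.

Definition infinite_branch (t : ptree) (p : nat -> nat) : Prop :=
  forall n, walk t p n <> None.

Definition reaches_box_right (t : ptree) : Prop :=
  forall p, infinite_branch t p -> exists n, box_right_step t p n.

Definition children (t : ptree) : list ptree :=
  match t with Node _ _ ch => ch end.

Lemma fin_proof_walk_ends t : fin_proof t -> forall p, exists n, walk t p n = None.
Proof.
  induction 1 as [s r ch _ _ IH]; intros p.
  destruct (nth_error ch (p 0)) as [c|] eqn:E.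
  - destruct (IH c (nth_error_In _ _ E) (fun k => p (S k))) as [n Hn].
    exists (S n). rewrite walk_node_succ, E. exact Hn.
  - exists 1. rewrite walk_node_succ, E. reflexivity.
Qed.

Lemma fin_proof_reaches_box_right t : fin_proof t -> reaches_box_right t.
Proof.
  intros Ht p Hinf. destruct (fin_proof_walk_ends t Ht p) as [n Hn].
  contradiction (Hinf n).
Qed.

Lemma reaches_box_right_node s r ch :
  (forall i c, nth_error ch i = Some c ->
     (r = RBox /\ i = 1) \/ reaches_box_right c) ->
  reaches_box_right (Node s r ch).
Proof.
  intros Hch p Hinf.
  destruct (nth_error ch (p 0)) as [c|] eqn:E.
  2:{ exfalso. apply (Hinf 1). rewrite walk_node_succ, E. reflexivity. }
  destruct (Hch _ _ E) as [[-> Hp]|Hc].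
  - exists 0. split; [exists s, ch; reflexivity|exact Hp].
  - destruct (Hc (fun k => p (S k))) as [n [[s' [ch' Hw]] Hp]].
    { intros n. specialize (Hinf (S n)). rewrite walk_node_succ, E in Hinf.
      exact Hinf. }
    exists (S n). split; [|exact Hp].
    exists s', ch'. rewrite walk_node_succ, E. exact Hw.
Qed.

Lemma inf_proof_of_invariant (Inv : ptree -> Prop) :
  (forall t, Inv t -> node_ok t) ->
  (forall t c, Inv t -> In c (children t) -> Inv c) ->
  (forall t, Inv t -> reaches_box_right t) ->
  forall t, Inv t -> inf_proof t.
Proof.
  intros Hok Hch Hreach t Ht.
  assert (Hwalk : forall p n t', walk t p n = Some t' -> Inv t').
  { intros p n; induction n as [|n IH]; intros t' Hw; simpl in Hw.
    - injection Hw as <-. exact Ht.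
    - destruct (walk t p n) as [[s r ch]|] eqn:E; [|discriminate].
      apply (Hch (Node s r ch)); [exact (IH _ eq_refl)|].
      exact (nth_error_In _ _ Hw). }
  split; [eauto|].
  intros p Hinf N.
  destruct (walk t p N) as [t'|] eqn:EN; [|contradiction (Hinf N EN)].
  destruct (Hreach t' (Hwalk _ _ _ EN) (fun k => p (N + k)))
    as [m [[s [ch Hw]] Hp]].
  { intros m Hm. apply (Hinf (N + m)). rewrite walk_add, EN. exact Hm. }
  exists (N + m). split; [apply Nat.le_add_r|]. split; [|exact Hp].
  exists s, ch. rewrite walk_add, EN. exact Hw.
Qed.

Lemma inf_proof_of_cycle (ns : list ptree) :
  (forall t, In t ns ->
     node_ok t /\ reaches_box_right t /\
     forall c, In c (children t) -> In c ns \/ fin_proof c) ->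
  forall t, In t ns -> inf_proof t.
Proof.
  intros Hns t0 Ht0.
  apply (inf_proof_of_invariant (fun t => In t ns \/ fin_proof t)); [| | |left; exact Ht0].
  - intros t [Ht|Ht]; [apply Hns, Ht|].
    destruct Ht as [s r ch Hstep _]. exact Hstep.
  - intros t c [Ht|Ht]; [apply Hns, Ht|].
    destruct Ht as [s r ch _ Hch]. auto.
  - intros t [Ht|Ht]; [apply Hns, Ht|apply fin_proof_reaches_box_right, Ht].
Qed.

Section Grz_cycle.

Variable A : form.
Let C := Imp (Box (Imp A (Box A))) A.

Lemma fin_provable_side : fin_provable ([Box C], [Imp A (Box A); A]).
Proof.
  eapply (fin_provable_step _ RImpR).
  { exists [Box C], [A], A, (Box A). split; [split; reflexivity|reflexivity]. }
  repeat constructor. apply (fin_provable_identity A); simpl; auto.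
Qed.

Variables ax side : ptree.
Hypothesis ax_fin : fin_proof ax.
Hypothesis ax_label : label ax = ([A; Box C], [A]).
Hypothesis side_fin : fin_proof side.
Hypothesis side_label : label side = ([Box C], [Imp A (Box A); A]).

CoFixpoint grz_tree : ptree :=
  Node ([Box C], [A]) RRefl
    [Node ([C; Box C], [A]) RImpL
       [ax;
        Node ([Box C], [Box (Imp A (Box A)); A]) RBox
          [side;
           Node ([Box C], [Imp A (Box A)]) RImpR
             [Node ([A; Box C], [Box A]) RBox [ax; grz_tree]]]]].

Definition loop_box := Node ([A; Box C], [Box A]) RBox [ax; grz_tree].
Definition loop_impR := Node ([Box C], [Imp A (Box A)]) RImpR [loop_box].
Definition loop_box_outer :=
  Node ([Box C], [Box (Imp A (Box A)); A]) RBox [side; loop_impR].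
Definition loop_impL := Node ([C; Box C], [A]) RImpL [ax; loop_box_outer].

Lemma grz_tree_unfold : grz_tree = Node ([Box C], [A]) RRefl [loop_impL].
Proof.
  rewrite (ptree_eta grz_tree) at 1. reflexivity.
Qed.

Definition loop_nodes : list ptree :=
  [grz_tree; loop_impL; loop_box_outer; loop_impR; loop_box].

Lemma loop_nodes_ok : Forall node_ok loop_nodes.
Proof.
  repeat constructor; simpl.
  - exists [], [A], C.
    split; [split; reflexivity|reflexivity].
  - exists [Box C], [A], (Box (Imp A (Box A))), A. rewrite ax_label.
    split; [split; reflexivity|reflexivity].
  - exists [], [A], [C], (Imp A (Box A)). rewrite side_label.
    split; [split; reflexivity|reflexivity].
  - exists [Box C], [], A, (Box A). split; [split; reflexivity|reflexivity].
  - exists [A], [], [C], A. rewrite ax_label.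
    split; [split; reflexivity|reflexivity].
Qed.

Lemma loop_nodes_children t c :
  In t loop_nodes -> In c (children t) -> In c loop_nodes \/ fin_proof c.
Proof.
  intros Ht Hc.
  repeat destruct Ht as [<-|Ht]; try contradiction;
    repeat destruct Hc as [<-|Hc]; try contradiction;
    simpl; tauto.
Qed.

Lemma loop_nodes_reach_box_right : Forall reaches_box_right loop_nodes.
Proof.
  assert (Hbox : reaches_box_right loop_box).
  { apply reaches_box_right_node. intros [|[|i]] c E; simpl in E.
    - injection E as <-. right. apply fin_proof_reaches_box_right, ax_fin.
    - left. split; reflexivity.
    - destruct i; discriminate. }
  assert (HimpR : reaches_box_right loop_impR).
  { apply reaches_box_right_node. intros [|i] c E; simpl in E.
    - injection E as <-. right. exact Hbox.
    - destruct i; discriminate. }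
  assert (Houter : reaches_box_right loop_box_outer).
  { apply reaches_box_right_node. intros [|[|i]] c E; simpl in E.
    - injection E as <-. right. apply fin_proof_reaches_box_right, side_fin.
    - injection E as <-. right. exact HimpR.
    - destruct i; discriminate. }
  assert (HimpL : reaches_box_right loop_impL).
  { apply reaches_box_right_node. intros [|[|i]] c E; simpl in E.
    - injection E as <-. right. apply fin_proof_reaches_box_right, ax_fin.
    - injection E as <-. right. exact Houter.
    - destruct i; discriminate. }
  assert (Hroot : reaches_box_right grz_tree).
  { rewrite grz_tree_unfold. apply reaches_box_right_node.
    intros [|i] c E; simpl in E.
    - injection E as <-. right. exact HimpL.
    - destruct i; discriminate. }
  repeat constructor; assumption.
Qed.

Lemma grz_tree_inf_proof : inf_proof grz_tree.
Proof.
  apply (inf_proof_of_cycle loop_nodes); [|left; reflexivity].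
  intros t Ht. repeat split.
  - exact (proj1 (Forall_forall _ _) loop_nodes_ok t Ht).
  - exact (proj1 (Forall_forall _ _) loop_nodes_reach_box_right t Ht).
  - intros c. exact (loop_nodes_children t c Ht).
Qed.

End Grz_cycle.

Theorem lemma3p2 : forall A : form,
  Grz_provable ([Box (Imp (Box (Imp A (Box A))) A)], [A]).
Proof.
  intros A.
  destruct (fin_provable_identity A [A; Box (Imp (Box (Imp A (Box A))) A)] [A])
    as (ax & ax_fin & ax_label); simpl; auto.
  destruct (fin_provable_side A) as (side & side_fin & side_label).
  exists (grz_tree A ax side). split; [|reflexivity].
  exact (grz_tree_inf_proof A ax side ax_fin ax_label side_fin side_label).
Qed.
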